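(* Consider the P-SSD algorithm described in the context, executed over a constant (time-invariant) digraph $G$, and let $C_{\mathrm{SSD}}=\mathrm{SSD}(D(X),D(Y))$. Let $i$ be a globally reachable node of $G$ and define $l=\max_{j\in\{1,\dots,M\}}\mathrm{dist}(j,i)$. Then $\mathcal{R}(C_k^i)=\mathcal{R}(C_{\mathrm{SSD}})$ for all $k\ge l+1$.
   Context: Data setting: a map $T:\mathcal{M}\to\mathcal{M}$, $\mathcal{M}\subseteq\mathbb{R}^n$; a dictionary $D(x)=[d_1(x),\dots,d_{N_d}(x)]$ of real-valued functions on $\mathcal{M}$; data matrices $X,Y\in\mathbb{R}^{N\times n}$ whose $i$-th rows $x_i^T,y_i^T$ satisfy $y_i=T(x_i)$; $D(X)\in\mathbb{R}^{N\times N_d}$ is the matrix with rows $D(x_1),\dots,D(x_N)$ (similarly $D(Y)$). Assumption: $D(X)$ and $D(Y)$ have full column rank. There are $M$ agents; agent $i$ holds local dictionary snapshots $D(X_i),D(Y_i)$ (obtained from a subset of the snapshot pairs) such that the union over $i$ of the rows of $[D(X_i),D(Y_i)]$ equals the set of rows of $[D(X),D(Y)]$. There are signature matrices $D(X_s),D(Y_s)$ with full column rank such that the rows of $[D(X_s),D(Y_s)]$ are contained in the rows of $[D(X_i),D(Y_i)]$ for every $i$. SSD algorithm: given $A,B\in\mathbb{R}^{m\times q}$, set $A_1=A$, $B_1=B$, $C=I_q$, and iterate: let $[Z^A_j;Z^B_j]$ be a matrix whose columns form a basis of the null space of $[A_j,B_j]$ (with $Z^A_j$ having as many rows as $A_j$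 has columns); if the null space is trivial return $0$; if the number of rows of $Z^A_j$ is at most its number of columns, return $C$; otherwise set $C\leftarrow CZ^A_j$, $A_{j+1}=A_jZ^A_j$, $B_{j+1}=B_jZ^A_j$. Its output is denoted $\mathrm{SSD}(A,B)$. P-SSD algorithm: at iteration $k\ge1$ the digraph $G_k$ is used; an edge $(j,i)\in E_k$ means $j$ is an in-neighbor of $i$, and $\mathcal{N}_{\mathrm{in}}^k(i)$ denotes the in-neighbors of $i$ in $G_k$. Each agent $i$ sets $C_0^i=I_{N_d}$, $\mathrm{flag}_0^i=0$, and for $k=1,2,\dots$: receives $C_{k-1}^j$ for $j\in\mathcal{N}_{\mathrm{in}}^k(i)$; sets $D_k^i=\mathrm{basis}\big(\bigcap_{j\in\{i\}\cup\mathcal{N}_{\mathrm{in}}^k(i)}\mathcal{R}(C_{k-1}^j)\big)$; sets $E_k^i=\mathrm{SSD}(D(X_i)D_k^i,D(Y_i)D_k^i)$; if the number of columns of $D_k^iE_k^i$ is strictly less than that of $C_{k-1}^i$, sets $C_k^i=D_k^iE_k^i$ and $\mathrm{flag}_k^i=0$; otherwise sets $C_k^i=C_{k-1}^i$ and $\mathrm{flag}_k^i=1$; then transmits $C_k^i$ to its out-neighbors. Here $\mathrm{basis}(\mathcal{A})$ returns a matrix whose columns form a basis of the subspace $\mathcal{A}$, and returns $0$ if $\mathcal{A}=\{0\}$; the matrix $0$ is regarded as having $0$ columns. $\mathcal{R}(\cdot)$ denotes range space. A node is globally reachable if there is a directed path from every other node to it; $\mathrm{dist}(j,i)$ is the length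 of a shortest directed path from $j$ to $i$ (with $\mathrm{dist}(i,i)=0$). *)

From HB Require Import structures.
From mathcomp Require Import all_boot all_order all_algebra.
Set Implicit Arguments.
Unset Strict Implicit.
Unset Printing Implicit Defensive.
Import GRing.Theory Num.Theory.
Local Open Scope ring_scope.

Definition mxc (R : fieldType) (m : nat) := {c : nat & 'M[R]_(m, c)}.

(* Range space: R(A) is the column space of A, i.e. the row space of A^T.
   R(A) = R(B)  is  (A^T == B^T)%MS. *)

(* The columns of Z form a basis of the subspace whose elements are the
   (transposed) rows of the row space of S (MathComp's representation of a
   subspace of R^m by a matrix with m columns).  A matrix with 0 columns is
   the (unique) basis of the zero subspace, which matches the convention
   basis({0}) = 0 with 0 columns. *)
Definition is_basis_of (R : fieldType) (m c p : nat)
  (Z : 'M[R]_(m, c)) (S : 'M[R]_(p, m)) : bool :=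
  row_free Z^T && (Z^T == S)%MS.

(* Null space of N : 'M_(m,q), i.e. {v | N v = 0}, represented as a row space:
   kermx N^T  (whose row space is {u | u *m N^T = 0}). *)
Definition nullsp (R : fieldType) (m q : nat) (N : 'M[R]_(m, q)) : 'M[R]_q :=
  kermx N^T.

(* Relational semantics of the SSD algorithm with accumulator C:
   ssd_rel C A B out  means that, starting the loop with current matrices
   A_j = A, B_j = B and C = C, some run of the algorithm (for some choice of
   the null-space bases) returns out. *)
Inductive ssd_rel (R : fieldType) (m q0 : nat) :
  forall q, 'M[R]_(q0, q) -> 'M[R]_(m, q) -> 'M[R]_(m, q) -> mxc R q0 -> Prop :=
| ssd_null q (C : 'M[R]_(q0, q)) (A B : 'M[R]_(m, q)) :
    (nullsp (row_mx A B) == (0 : 'M[R]_(q + q)))%MS ->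
    ssd_rel C A B (existT _ 0%N (0 : 'M[R]_(q0, 0)))
| ssd_stop q (C : 'M[R]_(q0, q)) (A B : 'M[R]_(m, q)) c (Z : 'M[R]_(q + q, c)) :
    ~~ (nullsp (row_mx A B) == (0 : 'M[R]_(q + q)))%MS ->
    is_basis_of Z (nullsp (row_mx A B)) ->
    (q <= c)%N ->
    ssd_rel C A B (existT _ q C)
| ssd_step q (C : 'M[R]_(q0, q)) (A B : 'M[R]_(m, q)) c (Z : 'M[R]_(q + q, c))
    (out : mxc R q0) :
    ~~ (nullsp (row_mx A B) == (0 : 'M[R]_(q + q)))%MS ->
    is_basis_of Z (nullsp (row_mx A B)) ->
    (c < q)%N ->
    ssd_rel (C *m usubmx Z) (A *m usubmx Z) (B *m usubmx Z) out ->
    ssd_rel C A B out.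

Definition SSD_out (R : fieldType) (m q : nat) (A B : 'M[R]_(m, q))
  (out : mxc R q) : Prop :=
  ssd_rel (1%:M : 'M[R]_q) A B out.

(* Relational semantics of P-SSD over the time-invariant digraph E
   (E j i  <=>  (j,i) is an edge, i.e. j is an in-neighbor of i).  The flags do not influence C and are omitted. *)
Definition pssd_run (R : fieldType) (M Nd : nat) (E : rel 'I_M)
  (Ni : 'I_M -> nat) (DXi DYi : forall i : 'I_M, 'M[R]_(Ni i, Nd))
  (C : nat -> 'I_M -> mxc R Nd) : Prop :=
  (forall i, C 0%N i = existT _ Nd (1%:M : 'M[R]_Nd)) /\
  forall (k : nat) (i : 'I_M),
    exists (d : nat) (Dk : 'M[R]_(Nd, d)),
      is_basis_of Dk
        (\bigcap_(j | (j == i) || E j i) <<(projT2 (C k j))^T>>)%MS /\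
      exists Ek : mxc R d,
        SSD_out (DXi i *m Dk) (DYi i *m Dk) Ek /\
        C k.+1 i = (if (projT1 Ek < projT1 (C k i))%N
                    then existT _ (projT1 Ek) (Dk *m projT2 Ek)
                    else C k i).

Definition Dmat (R : fieldType) (n Nd N : nat) (D : 'rV[R]_n -> 'rV[R]_Nd)
  (X : 'M[R]_(N, n)) : 'M[R]_(N, Nd) :=
  \matrix_(k < N) D (row k X).

Definition walkb (T : finType) (E : rel T) (len : nat) (j i : T) : bool :=
  [exists p : len.-tuple T, path E j p && (last j p == i)].

(* A shortest
   walk, when one exists, has length < #|T|, so the search over 0..#|T|-1
   is exhaustive (for unreachable pairs the value #|T| is irrelevant). *)
Definition dist (T : finType) (E : rel T) (j i : T) : nat :=
  find (fun len => walkb E len j i) (iota 0 #|T|).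

(* SSD returns a basis of the largest subspace S with R(D(X) S) <= R(D(Y) S).
   If the data are split among agents, invariance for every agent's data implies
   invariance for all the data as soon as the witnesses w in u D(X_j)^T =
   w D(Y_j)^T can be chosen independently of j; the signature data, held by all
   agents with D(Y_s) of full column rank, force this.  Along P-SSD each
   R(C_k^j) contains R(C_SSD), which is invariant for every agent's data, and
   R(C_(k+1)^j) is contained in R(C_k^j') for each in-neighbour j'.  Hence for
   k > l the space R(C_k^i) lies in an iterate of every agent j that is
   invariant for j's data, so it is globally invariant and lies in R(C_SSD). *)

From HB Require Import structures.
From mathcomp Require Import all_boot all_order all_algebra.
Import GRing.Theory Num.Theory.
Set Implicit Arguments.
Unset Strict Implicit.
Unset Printing Implicit Defensive.
Local Open Scope ring_scope.

Section Invariance.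
Variable R : fieldType.

(* The rows of [S] span R(C) for C = S^T, and the condition reads
   R(A C) <= R(B C) in the column-space notation of the paper. *)
Definition invariant_mx m q p (A B : 'M[R]_(m, q)) (S : 'M[R]_(p, q)) :=
  (S *m A^T <= S *m B^T)%MS.

Definition max_invariant_in m q p r (A B : 'M[R]_(m, q))
    (W : 'M[R]_(p, q)) (U : 'M[R]_(r, q)) :=
  [/\ (U <= W)%MS, invariant_mx A B U &
      forall s (S : 'M[R]_(s, q)), (S <= W)%MS -> invariant_mx A B S -> (S <= U)%MS].

Lemma invariant_mxMr m q d p (A B : 'M[R]_(m, q)) (D : 'M[R]_(q, d))
    (S : 'M[R]_(p, d)) :
  invariant_mx (A *m D) (B *m D) S = invariant_mx A B (S *m D^T).
Proof. by rewrite /invariant_mx !trmx_mul !mulmxA. Qed.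

Lemma eqmx_invariant m q p r (A B : 'M[R]_(m, q)) (U : 'M[R]_(p, q))
    (V : 'M[R]_(r, q)) :
  (U :=: V)%MS -> invariant_mx A B U = invariant_mx A B V.
Proof. by move=> eUV; rewrite /invariant_mx (eqmxMr _ eUV) (eqmxMr _ eUV). Qed.

Lemma row_free_mul m n p (A : 'M[R]_(m, n)) (B : 'M[R]_(n, p)) :
  row_free A -> row_free B -> row_free (A *m B).
Proof. by move=> fA fB; rewrite /row_free mxrankMfree. Qed.

Lemma row_mx_mul_tr m q p (A B : 'M[R]_(m, q)) (X Xb : 'M[R]_(p, q)) :
  row_mx X Xb *m (row_mx A B)^T = X *m A^T + Xb *m B^T.
Proof. by rewrite tr_row_mx mul_row_col. Qed.

End Invariance.

Section SSDCorrect.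
Variables (R : fieldType) (m q0 : nat) (A B : 'M[R]_(m, q0)).

Lemma invariant_sub_nullsp q p (C : 'M[R]_(q0, q)) (S : 'M[R]_(p, q0)) :
  (S <= C^T)%MS -> invariant_mx A B S ->
  exists X Xb, S = X *m C^T /\
    (row_mx X Xb <= nullsp (row_mx (A *m C) (B *m C)))%MS.
Proof.
move=> /submxP[X ->] /submxP[Y eY]; exists X, (- (Y *m X)); split=> //.
apply/sub_kermxP; rewrite row_mx_mul_tr !trmx_mul !mulmxA eY !mulmxA.
by rewrite !mulNmx addrN.
Qed.

Lemma row_free_usubmx_nullsp q c (A' B' : 'M[R]_(m, q)) (Z : 'M[R]_(q + q, c)) :
  row_free B'^T -> is_basis_of Z (nullsp (row_mx A' B')) ->
  row_free (usubmx Z)^T.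
Proof.
move=> fB /andP[fZ /eqmxP eZ].
have /sub_kermxP kerZ : (Z^T <= nullsp (row_mx A' B'))%MS by rewrite eZ.
apply: inj_row_free => v vZ0.
move: kerZ; rewrite -[Z]vsubmxK tr_col_mx row_mx_mul_tr.
move/(congr1 (mulmx v)); rewrite mulmx0 mulmxDr !mulmxA vZ0 mul0mx add0r.
move/eqP; rewrite mulmx_free_eq0 // => /eqP vZd0.
apply/eqP; rewrite -(mulmx_free_eq0 _ fZ) -[Z]vsubmxK tr_col_mx mul_mx_row.
by rewrite vZ0 vZd0 row_mx0.
Qed.

Lemma ssd_stop_invariant q c (A' B' : 'M[R]_(m, q)) (Z : 'M[R]_(q + q, c)) :
  row_free B'^T -> is_basis_of Z (nullsp (row_mx A' B')) -> (q <= c)%N ->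
  invariant_mx A' B' 1%:M.
Proof.
move=> fB bZ le_qc; have fZu := row_free_usubmx_nullsp fB bZ.
(* The top block of the null-space basis is square and invertible. *)
have /row_fullP[Bf eBf] : row_full (usubmx Z)^T.
  by rewrite /row_full (eqP fZu) eqn_leq -{1}(eqP fZu) rank_leq_col le_qc.
case/andP: bZ => _ /eqmxP eZ; rewrite /invariant_mx !mul1mx.
have /sub_kermxP : (Z^T <= nullsp (row_mx A' B'))%MS by rewrite eZ.
rewrite -[Z]vsubmxK tr_col_mx row_mx_mul_tr => /(congr1 (mulmx Bf)).
rewrite mulmx0 mulmxDr !mulmxA eBf mul1mx => /eqP; rewrite addr_eq0 => /eqP ->.
by rewrite eqmx_opp submxMl.
Qed.

Lemma ssd_step_sub q c (C : 'M[R]_(q0, q)) (Z : 'M[R]_(q + q, c)) p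
    (S : 'M[R]_(p, q0)) :
  is_basis_of Z (nullsp (row_mx (A *m C) (B *m C))) ->
  (S <= C^T)%MS -> invariant_mx A B S -> (S <= (C *m usubmx Z)^T)%MS.
Proof.
case/andP=> _ /eqmxP eZ sSC iS.
have [X [Xb [-> kerX]]] := invariant_sub_nullsp sSC iS.
have /submxP[W] : (row_mx X Xb <= Z^T)%MS by rewrite eZ.
rewrite -[Z]vsubmxK tr_col_mx mul_mx_row => /eq_row_mx[-> _].
by rewrite vsubmxK trmx_mul -mulmxA submxMl.
Qed.

Hypothesis fB : row_free B^T.

Lemma ssd_rel_max q (C : 'M[R]_(q0, q)) A' B' out :
  ssd_rel C A' B' out -> A' = A *m C -> B' = B *m C -> row_free C^T ->
  row_free (projT2 out)^T /\ max_invariant_in A B C^T (projT2 out)^T.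
Proof.
have fBC q' (C' : 'M[R]_(q0, q')) : row_free C'^T -> row_free (B *m C')^T.
  by move=> fC; rewrite trmx_mul row_free_mul.
elim=> {q C A' B' out} q C A' B'.
- move=> null0 eA eB _ /=; subst A' B'; rewrite trmx0 /row_free mxrank0; split=> //.
  split; [exact: sub0mx | by rewrite /invariant_mx !mul0mx |].
  move=> p S sSC iS; have [X [Xb [-> kerX]]] := invariant_sub_nullsp sSC iS.
  move: kerX; rewrite (eqmx0P null0) submx0 -row_mx0 => /eqP/eq_row_mx[-> _].
  by rewrite mul0mx sub0mx.
- move=> c Z _ bZ le_qc eA eB fC /=; subst A' B'; split=> //; split=> //.
  by rewrite -[C^T]mul1mx -invariant_mxMr (ssd_stop_invariant (fBC _ _ fC) bZ).
- move=> c Z out _ bZ lt_cq _ IH eA eB fC; subst A' B'.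
  have fZu := row_free_usubmx_nullsp (fBC _ _ fC) bZ.
  have fCZ : row_free (C *m usubmx Z)^T by rewrite trmx_mul row_free_mul.
  have [fO [sOCZ iO maxO]] := IH (esym (mulmxA _ _ _)) (esym (mulmxA _ _ _)) fCZ.
  split=> //; split=> //.
    by apply: submx_trans sOCZ _; rewrite trmx_mul submxMl.
  by move=> p S sSC iS; apply: maxO => //; exact: ssd_step_sub bZ sSC iS.
Qed.

Lemma SSD_out_max out : SSD_out A B out ->
  row_free (projT2 out)^T /\ max_invariant_in A B 1%:M (projT2 out)^T.
Proof.
move=> ssdO; have := ssd_rel_max ssdO (esym (mulmx1 A)) (esym (mulmx1 B)).
by rewrite trmx1 row_free_unit unitmx1 => /(_ isT).
Qed.

End SSDCorrect.

Lemma SSD_out_basis (R : fieldType) m q p d (A B : 'M[R]_(m, q))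
    (W : 'M[R]_(p, q)) (Dk : 'M[R]_(q, d)) out :
  is_basis_of Dk W -> row_free B^T -> SSD_out (A *m Dk) (B *m Dk) out ->
  row_free (Dk *m projT2 out)^T /\
  max_invariant_in A B W (Dk *m projT2 out)^T.
Proof.
case/andP=> fDk /eqmxP eDk fB ssdO.
have fBD : row_free (B *m Dk)^T by rewrite trmx_mul row_free_mul.
have [fO [_ iO maxO]] := SSD_out_max fBD ssdO.
rewrite trmx_mul; split; first exact: row_free_mul.
split; [by rewrite -eDk submxMl | by rewrite -invariant_mxMr |].
move=> s S; rewrite -eDk => /submxP[X ->]; rewrite -invariant_mxMr => iX.
by rewrite submxMr // maxO // submx1.
Qed.

Section RowsOfData.
Variable R : fieldType.

Lemma mul_trmx_entry m n (u : 'rV[R]_n) (A : 'M[R]_(m, n)) k :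
  (u *m A^T) 0 k = (u *m (row k A)^T) 0 0.
Proof. by rewrite !mxE; apply: eq_bigr => t _; rewrite !mxE. Qed.

Lemma mul_trmx_rows m1 m2 n (A1 B1 : 'M[R]_(m1, n)) (A2 B2 : 'M[R]_(m2, n))
    (u w : 'rV[R]_n) :
  (forall r, exists k, row r (row_mx A1 B1) = row k (row_mx A2 B2)) ->
  u *m A2^T = w *m B2^T -> u *m A1^T = w *m B1^T.
Proof.
move=> rows12 e2; apply/rowP => r.
have [k] := rows12 r; rewrite !row_row_mx => /eq_row_mx[eA eB].
by rewrite mul_trmx_entry [RHS]mul_trmx_entry eA eB -!mul_trmx_entry e2.
Qed.

Lemma row_free_trmx_rows m1 m2 n (A1 B1 : 'M[R]_(m1, n)) (A2 B2 : 'M[R]_(m2, n)) :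
  (forall r, exists k, row r (row_mx A1 B1) = row k (row_mx A2 B2)) ->
  row_free B1^T -> row_free B2^T.
Proof.
move=> rows12 fB1; apply: inj_row_free => v vB2.
have /esym/eqP : 0 *m A1^T = v *m B1^T.
  by apply: mul_trmx_rows rows12 _; rewrite vB2 !mul0mx.
by rewrite mul0mx mulmx_free_eq0 // => /eqP.
Qed.

Lemma invariant_mxP m n p (A B : 'M[R]_(m, n)) (V : 'M[R]_(p, n)) :
  reflect (forall u : 'rV_n, (u <= V)%MS ->
             exists2 w : 'rV_n, (w <= V)%MS & u *m A^T = w *m B^T)
          (invariant_mx A B V).
Proof.
apply: (iffP idP) => [/submxP[Y eY] _ /submxP[a ->] | iV].
  by exists (a *m Y *m V); rewrite ?submxMl // -mulmxA eY !mulmxA.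
apply/row_subP => k; rewrite !row_mul.
by have [w wV ->] := iV _ (row_sub k V); rewrite submxMr.
Qed.

Lemma invariant_mx_rows m1 m2 n p (A1 B1 : 'M[R]_(m1, n)) (A2 B2 : 'M[R]_(m2, n))
    (V : 'M[R]_(p, n)) :
  (forall r, exists k, row r (row_mx A1 B1) = row k (row_mx A2 B2)) ->
  invariant_mx A2 B2 V -> invariant_mx A1 B1 V.
Proof.
move=> rows12 /invariant_mxP iV; apply/invariant_mxP => u uV.
by have [w wV e] := iV u uV; exists w; last exact: mul_trmx_rows e.
Qed.

(* The signature rows are shared by all agents and [DYs] has full column rank,
   so the vector [w] with [u DX^T = w DY^T] does not depend on the agent. *)
Lemma invariant_mx_cover n M N (GA GB : 'M[R]_(N, n)) (Ni : 'I_M -> nat)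
    (DXi DYi : forall i : 'I_M, 'M[R]_(Ni i, n)) Ns (DXs DYs : 'M[R]_(Ns, n)) :
  row_free DYs^T ->
  (forall k : 'I_N, exists (j : 'I_M) (r : 'I_(Ni j)),
      row r (row_mx (DXi j) (DYi j)) = row k (row_mx GA GB)) ->
  (forall (j : 'I_M) (r : 'I_Ns), exists r' : 'I_(Ni j),
      row r (row_mx DXs DYs) = row r' (row_mx (DXi j) (DYi j))) ->
  forall p (V : 'M[R]_(p, n)) i, invariant_mx (DXi i) (DYi i) V ->
  (forall j, exists q (W : 'M[R]_(q, n)),
      (V <= W)%MS /\ invariant_mx (DXi j) (DYi j) W) ->
  invariant_mx GA GB V.
Proof.
move=> fDYs cover sig p V i /invariant_mxP iV supW; apply/invariant_mxP => u uV.
have [w wV ew] := iV u uV; exists w => //; apply/rowP => k.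
have [j [r /esym]] := cover k; rewrite !row_row_mx => /eq_row_mx[eA eB].
have [q [W [sVW /invariant_mxP iW]]] := supW j.
have [w' _ ew'] := iW u (submx_trans uV sVW).
have -> : w = w'.
  apply: (row_free_inj fDYs).
  by rewrite -(mul_trmx_rows (sig i) ew) -(mul_trmx_rows (sig j) ew').
by rewrite mul_trmx_entry [RHS]mul_trmx_entry eA eB -!mul_trmx_entry ew'.
Qed.

End RowsOfData.

Lemma connect_dist_path (T : finType) (E : rel T) j i : connect E j i ->
  exists p : seq T, [/\ path E j p, last j p = i & size p = dist E j i].
Proof.
move=> /connectP[p pE ->]; have [p' p'E uniq_p' _] := shortenP pE.
have lt_p'T : (size p' < #|T|)%N.
  by have := max_card (mem (j :: p')); rewrite (card_uniqP uniq_p').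
have has_walk : has (fun len => walkb E len j (last j p')) (iota 0 #|T|).
  apply/hasP; exists (size p'); first by rewrite mem_iota.
  by apply/existsP; exists (in_tuple p'); rewrite /= p'E eqxx.
have := nth_find 0%N has_walk; rewrite nth_iota; last first.
  by rewrite -{2}(size_iota 0 #|T|) -has_find.
by move=> /existsP[t /andP[tE /eqP tlast]]; exists t; rewrite size_tuple.
Qed.

Section PSSD.
Variables (R : fieldType) (Nd M : nat) (E : rel 'I_M) (Ni : 'I_M -> nat).
Variables (DXi DYi : forall i : 'I_M, 'M[R]_(Ni i, Nd)) (C : nat -> 'I_M -> mxc R Nd).
Hypothesis run : pssd_run E DXi DYi C.
Hypothesis fDYi : forall j, row_free (DYi j)^T.

Local Notation V k j := (projT2 (C k j))^T.
Local Notation neighbors_cap k j :=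
  (\bigcap_(j' | (j' == j) || E j' j) <<V k j'>>)%MS.

Lemma pssd_row_free k j : row_free (V k j).
Proof.
elim: k j => [|k IHk] j; first by rewrite run.1 trmx1 row_free_unit unitmx1.
have [d [Dk [bDk [Ek [ssdE ->]]]]] := run.2 k j.
by case: ifP => _ //=; have [] := SSD_out_basis bDk (fDYi j) ssdE.
Qed.

Lemma pssd_update k j : exists q (U : 'M[R]_(q, Nd)),
  (V k.+1 j == U)%MS /\ max_invariant_in (DXi j) (DYi j) (neighbors_cap k j) U.
Proof.
have [d [Dk [bDk [Ek [ssdE ->]]]]] := run.2 k j.
have [fU maxU] := SSD_out_basis bDk (fDYi j) ssdE.
exists (projT1 Ek), (Dk *m projT2 Ek)^T; split=> //.
case: ifP => [_|/negbT]; first exact/eqmxP.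
rewrite -leqNgt /= => le_VU.
have sUV : ((Dk *m projT2 Ek)^T <= V k j)%MS.
  have [sUW _ _] := maxU; apply: submx_trans sUW _.
  by rewrite (bigcapmx_inf j) ?eqxx // genmxE.
apply/eqmxP/eqmx_sym/eqmxP; rewrite -(mxrank_leqif_eq sUV) eqn_leq mxrankS //.
by rewrite (eqP fU) (eqP (pssd_row_free k j)).
Qed.

Lemma pssd_sub_neighbor k j j' : (j' == j) || E j' j -> (V k.+1 j <= V k j')%MS.
Proof.
move=> j'j; have [q [U [/eqmxP -> [sUW _ _]]]] := pssd_update k j.
by apply: submx_trans sUW _; rewrite (bigcapmx_inf j') // genmxE.
Qed.

Lemma pssd_local_invariant k j : (0 < k)%N ->
  invariant_mx (DXi j) (DYi j) (V k j).
Proof.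
case: k => // k _; have [q [U [/eqmxP eVU [_ iU _]]]] := pssd_update k j.
by rewrite (eqmx_invariant _ _ eVU).
Qed.

Lemma pssd_sub_invariant p (S : 'M[R]_(p, Nd)) :
  (forall j, invariant_mx (DXi j) (DYi j) S) -> forall k j, (S <= V k j)%MS.
Proof.
move=> iS; elim=> [|k IHk] j; first by rewrite run.1 trmx1 submx1.
have [q [U [/eqmxP -> [_ _ maxU]]]] := pssd_update k j.
by apply: maxU (iS j); apply/sub_bigcapmxP => j' _; rewrite genmxE.
Qed.

Lemma pssd_sub_path k j (p : seq 'I_M) : path E j p -> (size p <= k)%N ->
  (V k (last j p) <= V (k - size p) j)%MS.
Proof.
elim: p j k => [|x p IHp] j k /=; first by rewrite subn0.
case/andP=> jx xp lt_pk; apply: submx_trans (IHp x k xp (ltnW lt_pk)) _.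
by rewrite -(subnSK lt_pk) pssd_sub_neighbor // jx orbT.
Qed.

End PSSD.

Theorem theorem5p2 (R : realFieldType) (n N Nd M : nat)
  (T : 'rV[R]_n -> 'rV[R]_n) (D : 'rV[R]_n -> 'rV[R]_Nd)
  (X Y : 'M[R]_(N, n))
  (hXY : forall k : 'I_N, row k Y = T (row k X))
  (hDX : row_full (Dmat D X)) (hDY : row_full (Dmat D Y))
  (Ni : 'I_M -> nat) (DXi DYi : forall i : 'I_M, 'M[R]_(Ni i, Nd))
  (hloc1 : forall (i : 'I_M) (r : 'I_(Ni i)), exists k : 'I_N,
      row r (row_mx (DXi i) (DYi i)) = row k (row_mx (Dmat D X) (Dmat D Y)))
  (hloc2 : forall k : 'I_N, exists (i : 'I_M) (r : 'I_(Ni i)),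
      row r (row_mx (DXi i) (DYi i)) = row k (row_mx (Dmat D X) (Dmat D Y)))
  (Ns : nat) (DXs DYs : 'M[R]_(Ns, Nd))
  (hDXs : row_full DXs) (hDYs : row_full DYs)
  (hsig : forall (i : 'I_M) (r : 'I_Ns), exists r' : 'I_(Ni i),
      row r (row_mx DXs DYs) = row r' (row_mx (DXi i) (DYi i)))
  (E : rel 'I_M) (i : 'I_M)
  (hreach : forall j : 'I_M, connect E j i)
  (CSSD : mxc R Nd) (hCSSD : SSD_out (Dmat D X) (Dmat D Y) CSSD)
  (C : nat -> 'I_M -> mxc R Nd) (hrun : pssd_run E DXi DYi C) :
  forall k : nat, ((\max_(j < M) dist E j i).+1 <= k)%N ->
    ((projT2 (C k i))^T == (projT2 CSSD)^T)%MS.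
Proof.
move=> k lt_lk.
have fDYs : row_free DYs^T by rewrite /row_free mxrank_tr.
have fDYi j : row_free (DYi j)^T := row_free_trmx_rows (hsig j) fDYs.
have fDY : row_free (Dmat D Y)^T by rewrite /row_free mxrank_tr.
have [_ [_ iS maxS]] := SSD_out_max fDY hCSSD.
apply/andP; split; last first.
  by apply: (pssd_sub_invariant hrun fDYi) => j; apply: invariant_mx_rows iS.
apply: maxS; first exact: submx1.
apply: (invariant_mx_cover fDYs hloc2 hsig (i := i)).
  by apply: (pssd_local_invariant hrun fDYi); apply: leq_trans lt_lk.
move=> j; have [p [pE pi size_p]] := connect_dist_path (hreach j).
have le_dl : (dist E j i <= \max_(j0 < M) dist E j0 i)%N by apply: (leq_bigmax j).
exists _, ((projT2 (C (k - size p)%N j))^T); split.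
  by rewrite -pi (pssd_sub_path hrun fDYi) // size_p (leq_trans le_dl (ltnW lt_lk)).
by apply: (pssd_local_invariant hrun fDYi); rewrite subn_gt0 size_p (leq_ltn_trans le_dl).
Qed.
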